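(* Consider offline data $\{(s_h^k,a_h^k,r_h^k)\}_{h\in[H]}^{k\in[K]}$ from a behavior policy $\mu$ in a linear MDP, with $\Sigma_h^k=\sum_{t=1}^{k-1}\phi_h(s_h^t,a_h^t)\phi_h(s_h^t,a_h^t)^T+I$. Assume there exists an optimal policy $\pi^*$ with $d^{\pi^*}_h(s,a)>0\implies d^\mu_h(s,a)>0$ for all $(h,s,a)$, and that $\kappa_h^{-1}:=\inf_{(s,a):d^\mu_h(s,a)>0}d^\mu_h(s,a)>0$ for all $h$. Then for any $h\in[H]$, \[ \sum_{k=1}^K\frac{d^*_h(s_h^k,a_h^k)}{d^\mu_h(s_h^k,a_h^k)}\|\phi_h(s_h^k,a_h^k)\|_{(\Sigma_h^k)^{-1}}\le\kappa_h\sqrt{2Kd\log(1+K/d)}, \] where $d^*_h=d^{\pi^*}_h$.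
   Context: Episodic MDP with horizon $H$; $d^\pi_h(s,a)$ is the state-action visitation density at step $h$ under policy $\pi$, assumed $\le1$. Linear MDP: known features $\phi_h:\mathcal{S}\times\mathcal{A}\to\mathbb{R}^d$ with $\|\phi_h(s,a)\|_2\le1$ (rewards and transitions linear in $\phi_h$). $\|x\|_A=\sqrt{x^TAx}$. *)

From HB Require Import structures.
From mathcomp Require Import all_boot all_order all_algebra.
From mathcomp Require Import all_classical all_reals all_analysis.
Set Implicit Arguments. Unset Strict Implicit. Unset Printing Implicit Defensive.
Import Order.TTheory GRing.Theory Num.Theory.
Local Open Scope ring_scope.
Local Open Scope classical_set_scope.

Definition vnorm2 (R : realType) (d : nat) (x : 'cV[R]_d) : R :=
  Num.sqrt (\sum_(i < d) x i 0 ^+ 2).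

Definition mxnorm (R : realType) (d : nat) (A : 'M[R]_d) (x : 'cV[R]_d) : R :=
  Num.sqrt ((x^T *m A *m x) 0 0).

(* Sigma_h^k with 0-based episode index k : sum over earlier episodes t < k,
   plus the identity.  feat t = phi_h(s_h^t, a_h^t). *)
Definition Sigma (R : realType) (d : nat) (feat : nat -> 'cV[R]_d) (k : nat)
  : 'M[R]_d :=
  1%:M + \sum_(t < k) feat t *m (feat t)^T.

Definition kappa_inv (R : realType) (S A : Type) (dmu : S -> A -> R) : R :=
  inf [set x : R | exists s a, 0 < dmu s a /\ x = dmu s a].

(* On the support of [d^mu_h] the density ratio is at most
   [kappa_h], so it suffices to bound the sum of elliptical potentials
   [sqrt w_k], [w_k = |x_k|^2_(Sigma_k^-1)], by [sqrt (2 K d log (1 + K/d))].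
   Since [Sigma_k >= I] and [|x_k| <= 1], each [w_k] lies in [0, 1], where
   [w <= 2 log (1 + w)].  By the matrix determinant lemma
   [prod_k (1 + w_k) = det Sigma_K], and by Hadamard's inequality and AM-GM
   [det Sigma_K <= (tr Sigma_K / d)^d <= (1 + K/d)^d].  Hence
   [sum_k w_k <= 2 d log (1 + K/d)], and Cauchy-Schwarz concludes. *)

From HB Require Import structures.
From mathcomp Require Import all_boot all_order all_algebra.
From mathcomp Require Import all_classical all_reals all_analysis.
From mathcomp Require Import ring lra.
Set Implicit Arguments. Unset Strict Implicit. Unset Printing Implicit Defensive.
Import Order.TTheory GRing.Theory Num.Theory.
Local Open Scope ring_scope.

Lemma sqr_sum_le (R : realFieldType) (I : finType) (c : I -> R) :
  (\sum_i c i) ^+ 2 <= #|I|%:R * \sum_i c i ^+ 2.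
Proof.
rewrite -(ler_pMn2r (_ : 0 < 2)%N) // expr2 big_distrlr /= -sumrMnl.
have cross i j : c i * c j *+ 2 <= c i ^+ 2 + c j ^+ 2.
  exact: (leif_mean_square_scaled _ _).1.
apply: (@le_trans _ _ (\sum_i \sum_j (c i ^+ 2 + c j ^+ 2))).
  by apply: ler_sum => i _; rewrite -sumrMnl; apply: ler_sum => j _.
rewrite (eq_bigr (fun i => c i ^+ 2 *+ #|I| + \sum_j c j ^+ 2)) => [|i _].
  by rewrite big_split /= sumrMnl sumr_const mulr_natl mulr2n.
by rewrite big_split /= sumr_const.
Qed.

Lemma sum_sqrt_le (R : rcfType) (I : finType) (c : I -> R) :
  (forall i, 0 <= c i) -> \sum_i Num.sqrt (c i) <= Num.sqrt (#|I|%:R * \sum_i c i).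
Proof.
move=> c_ge0; have sum_ge0 : 0 <= \sum_i Num.sqrt (c i).
  by apply: sumr_ge0 => i _; apply: sqrtr_ge0.
rewrite -(ger0_norm sum_ge0) -sqrtr_sqr ler_sqrt ?mulr_ge0 ?sumr_ge0 //.
have -> : \sum_i c i = \sum_i Num.sqrt (c i) ^+ 2.
  by apply: eq_bigr => i _; rewrite sqr_sqrtr.
exact: sqr_sum_le.
Qed.

Lemma ln_prod (R : realType) (I : Type) (r : seq I) (P : pred I) (f : I -> R) :
  (forall i, P i -> 0 < f i) ->
  ln (\prod_(i <- r | P i) f i) = \sum_(i <- r | P i) ln (f i).
Proof.
move=> f_gt0; elim: r => [|i r IH]; first by rewrite !big_nil ln1.
rewrite !big_cons; case: ifP => // Pi.
by rewrite lnM ?IH // posrE ?f_gt0 // prodr_gt0.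
Qed.

Lemma le_2ln1Dx (R : realType) (w : R) : 0 <= w <= 1 -> w <= 2 * ln (1 + w).
Proof.
move=> /andP[w_ge0 w_le1]; have w1_gt0 : 0 < 1 + w by lra.
have := @le_ln1Dx R (- (w / (1 + w))).
have -> : 1 - w / (1 + w) = (1 + w)^-1 by field; rewrite gt_eqF.
rewrite lnV ?posrE // lerNl opprK => /(_ _)/wrap[].
  by rewrite ltrNl opprK ltr_pdivrMr // mul1r; lra.
suff : w / 2 <= w / (1 + w) by lra.
by rewrite ler_wpM2l // lef_pV2 ?posrE //; lra.
Qed.

Lemma det1D_mul_tr (R : comNzRingType) n (u v : 'cV[R]_n) :
  \det (1%:M + u *m v^T) = 1 + (v^T *m u) 0 0.
Proof.
have E1 : block_mx (1%:M : 'M[R]_1) v^T (-u) 1%:M =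
   block_mx 1%:M 0 (-u) 1%:M *m block_mx 1%:M v^T 0 (1%:M + u *m v^T).
  rewrite mulmx_block ?mul1mx ?mul0mx ?mulmx0 ?mulmx1 ?addr0 ?add0r.
  by rewrite mulNmx addrA addrAC addNr add0r.
have E2 : block_mx (1%:M : 'M[R]_1) v^T (-u) 1%:M =
   block_mx (1%:M + v^T *m u) v^T 0 1%:M *m block_mx 1%:M 0 (-u) 1%:M.
  rewrite mulmx_block ?mul1mx ?mul0mx ?mulmx0 ?mulmx1 ?addr0 ?add0r.
  by rewrite mulmxN addrK.
have := congr1 determinant E1; rewrite {1}E2 !det_mulmx !det_lblock !det_ublock.
rewrite !det1 !mul1r !mulr1 => <-.
by rewrite det_mx11 !mxE eqxx.
Qed.

Section QuadraticForms.
Variable R : realFieldType.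

Definition qform n (P : 'M[R]_n) (z : 'cV[R]_n) : R := (z^T *m P *m z) 0 0.

Definition sqnorm n (z : 'cV[R]_n) : R := \sum_i z i 0 ^+ 2.

Definition posdef n (P : 'M[R]_n) := forall z : 'cV[R]_n, z != 0 -> 0 < qform P z.

Lemma sqnorm_ge0 n (z : 'cV[R]_n) : 0 <= sqnorm z.
Proof. by apply: sumr_ge0 => i _; apply: sqr_ge0. Qed.

Lemma sqnorm_gt0 n (z : 'cV[R]_n) : z != 0 -> 0 < sqnorm z.
Proof.
move=> nz; rewrite lt_def sqnorm_ge0 andbT; apply: contra nz.
rewrite psumr_eq0 => [/allP z0|i _]; last exact: sqr_ge0.
apply/eqP/matrixP => i j; rewrite ord1 mxE.
by apply/eqP; rewrite -sqrf_eq0; apply: (implyP (z0 i _)); rewrite ?mem_index_enum.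
Qed.

Lemma mulmx_tr_col n (u v : 'cV[R]_n) : (u^T *m v) 0 0 = \sum_i u i 0 * v i 0.
Proof. by rewrite mxE; apply: eq_bigr => i _; rewrite mxE. Qed.

Lemma sqnorm_mulmx_tr n (z : 'cV[R]_n) : sqnorm z = (z^T *m z) 0 0.
Proof. by rewrite mulmx_tr_col; apply: eq_bigr => i _; rewrite expr2. Qed.

Lemma posdef_drsubmx n (P : 'M[R]_(1 + n)) : posdef P -> posdef (drsubmx P).
Proof.
move=> Ppd z nz; have := Ppd (col_mx 0 z); rewrite col_mx_eq0 eqxx (negPf nz).
rewrite /qform -{1}(submxK P) tr_col_mx mul_row_block mul_row_col trmx0.
by rewrite mulmx0 !mul0mx !add0r => /(_ isT).
Qed.

Lemma det_block_schur n (a : 'M[R]_1) (b : 'cV[R]_n) (C : 'M[R]_n) :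
  C \in unitmx ->
  \det (block_mx a b^T b C) = (a - b^T *m invmx C *m b) 0 0 * \det C.
Proof.
move=> Cu.
have -> : block_mx a b^T b C = block_mx 1%:M (b^T *m invmx C) 0 1%:M
                               *m block_mx (a - b^T *m invmx C *m b) 0 b C.
  by rewrite mulmx_block !mul1mx !mul0mx !add0r mulmxKV // subrK.
by rewrite det_mulmx det_ublock det_lblock !det1 !mul1r det_mx11.
Qed.

Lemma hadamard_posdef n (P : 'M[R]_n) :
  P^T = P -> posdef P -> 0 < \det P <= \prod_i P i i.
Proof.
elim: n P => [|n IH] P Psym Ppd; first by rewrite det_mx00 big_ord0 ltr01 lexx.
move: P Psym Ppd; change n.+1 with (1 + n)%N => P Psym Ppd.
set a := ulsubmx P; set b := dlsubmx P; set C := drsubmx P.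
have PE : P = block_mx a b^T b C by rewrite /b trmx_dlsub Psym submxK.
have /andP[detC_gt0 detC_le] : 0 < \det C <= \prod_i C i i.
  by apply: IH (posdef_drsubmx Ppd); rewrite /C trmx_drsub Psym.
have Cu : C \in unitmx by rewrite unitmxE unitfE gt_eqF.
set y := invmx C *m b.
have schur_gt0 : 0 < (a - b^T *m y) 0 0.
  have := Ppd (col_mx 1%:M (- y)); rewrite col_mx_eq0 oner_eq0 => /(_ isT).
  rewrite /qform -mulmxA {1}PE mul_block_col !mulmxN mulKVmx // !mulmx1 addrN.
  by rewrite tr_col_mx mul_row_col mulmx0 addr0 trmx1 mul1mx.
have by_ge0 : 0 <= (b^T *m y) 0 0.
  have -> : b^T *m y = y^T *m C *m y.
    by rewrite /y trmx_mul trmx_inv -/C (_ : C^T = C) ?mulmxKV // /C trmx_drsub Psym.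
  have [->|ny] := eqVneq y 0; first by rewrite mulmx0 mxE.
  exact/ltW/(posdef_drsubmx Ppd).
rewrite PE det_block_schur // -mulmxA -/y -PE mulr_gt0 //=.
change (1 + n)%N with n.+1; rewrite big_ord_recl.
apply: ler_pM; [exact: ltW | exact: ltW | |].
  have -> : P ord0 ord0 = a 0 0 by rewrite /a !mxE lshift0.
  by rewrite mxE gerDl mxE oppr_le0.
have diagC i : P (lift ord0 i) (lift ord0 i) = C i i by rewrite /C !mxE rshift1.
by rewrite (eq_bigr _ (fun i _ => diagC i)).
Qed.

Lemma qform_delta n (P : 'M[R]_n) i : qform P (delta_mx i 0) = P i i.
Proof. by rewrite /qform trmx_delta -rowE -colE !mxE. Qed.

Lemma det_posdef_le_trace n (P : 'M[R]_n) :
  P^T = P -> posdef P -> \det P <= (\tr P / n%:R) ^+ n.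
Proof.
move=> Psym Ppd; have /andP[_ hadamard] := hadamard_posdef Psym Ppd.
apply: le_trans hadamard _.
have diag_ge0 i : 0 <= P i i.
  rewrite -qform_delta ltW // Ppd //.
  by apply/negP => /eqP/matrixP/(_ i 0)/eqP; rewrite !mxE !eqxx oner_eq0.
have [+ _] := leif_AGM (A := predT) (fun i _ => diag_ge0 i).
by rewrite cardT size_enum_ord.
Qed.

(* If [P >= I] then [P^-1 <= I]: with [y = P^-1 v], [|y|^2 <= y^T P y = v^T y]
   and [2 v^T y <= |v|^2 + |y|^2]. *)
Lemma qform_invmx_le n (P : 'M[R]_n) (v : 'cV[R]_n) :
  P \in unitmx -> (forall z, sqnorm z <= qform P z) ->
  0 <= qform (invmx P) v <= sqnorm v.
Proof.
move=> Pu Pge1; set y := invmx P *m v.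
have qPy : qform P y = qform (invmx P) v.
  rewrite /qform -mulmxA mulKVmx // -[y^T *m v]trmxK trmx_mul trmxK mxE.
  by rewrite /y mulmxA.
have amgm : 2 * qform (invmx P) v <= sqnorm v + sqnorm y.
  rewrite /qform -mulmxA -/y mulmx_tr_col /sqnorm -big_split mulr_sumr.
  apply: ler_sum => i _ /=; have := sqr_ge0 (v i 0 - y i 0); rewrite sqrrB; lra.
have := Pge1 y; have := sqnorm_ge0 y; rewrite qPy => ? ?; apply/andP; split; lra.
Qed.

End QuadraticForms.

Lemma sqr_vnorm2 (R : realType) n (z : 'cV[R]_n) : vnorm2 z ^+ 2 = sqnorm z.
Proof. by rewrite sqr_sqrtr ?sqnorm_ge0. Qed.

Section GramMatrix.
Variables (R : realType) (d : nat) (x : nat -> 'cV[R]_d).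

Lemma trmx_Sigma k : (Sigma x k)^T = Sigma x k.
Proof.
rewrite /Sigma raddfD /= tr_scalar_mx raddf_sum /=; congr (_ + _).
by apply: eq_bigr => t _; rewrite trmx_mul trmxK.
Qed.

Lemma qform_Sigma k z :
  qform (Sigma x k) z = sqnorm z + \sum_(t < k) ((x t)^T *m z) 0 0 ^+ 2.
Proof.
rewrite /qform /Sigma mulmxDr mulmxDl mulmx1 mxE -sqnorm_mulmx_tr; congr (_ + _).
rewrite mulmx_sumr mulmx_suml summxE; apply: eq_bigr => t _.
by rewrite !mulmxA -mulmxA -[z^T *m x t]trmxK trmx_mul trmxK mxE big_ord1 mxE expr2.
Qed.

Lemma sqnorm_le_qform_Sigma k z : sqnorm z <= qform (Sigma x k) z.
Proof. by rewrite qform_Sigma lerDl; apply: sumr_ge0 => t _; apply: sqr_ge0. Qed.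

Lemma posdef_Sigma k : posdef (Sigma x k).
Proof. by move=> z /sqnorm_gt0/lt_le_trans; apply; apply: sqnorm_le_qform_Sigma. Qed.

Lemma det_Sigma_gt0 k : 0 < \det (Sigma x k).
Proof. by have /andP[] := hadamard_posdef (trmx_Sigma k) (posdef_Sigma k). Qed.

Lemma Sigma_unitmx k : Sigma x k \in unitmx.
Proof. by rewrite unitmxE unitfE gt_eqF ?det_Sigma_gt0. Qed.

Lemma det_SigmaS k :
  \det (Sigma x k.+1) = \det (Sigma x k) * (1 + qform (invmx (Sigma x k)) (x k)).
Proof.
have -> : Sigma x k.+1 = Sigma x k *m (1%:M + (invmx (Sigma x k) *m x k) *m (x k)^T).
  rewrite mulmxDr mulmx1 !mulmxA mulmxV ?Sigma_unitmx // mul1mx.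
  by rewrite /Sigma big_ord_recr /= addrA.
by rewrite det_mulmx det1D_mul_tr /qform mulmxA.
Qed.

Lemma det_Sigma K :
  \det (Sigma x K) = \prod_(k < K) (1 + qform (invmx (Sigma x k)) (x k)).
Proof.
elim: K => [|K IH]; first by rewrite big_ord0 /Sigma big_ord0 addr0 det1.
by rewrite big_ord_recr /= -IH det_SigmaS.
Qed.

Lemma mxtrace_Sigma K : \tr (Sigma x K) = d%:R + \sum_(t < K) sqnorm (x t).
Proof.
rewrite /Sigma mxtraceD mxtrace_scalar raddf_sum /=; congr (_ + _).
by apply: eq_bigr => t _; rewrite mxtrace_mulC trace_mx11 sqnorm_mulmx_tr.
Qed.

Hypothesis x_le1 : forall t, sqnorm (x t) <= 1.

Lemma det_Sigma_le K : \det (Sigma x K) <= (1 + K%:R / d%:R) ^+ d.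
Proof.
apply: le_trans (det_posdef_le_trace (trmx_Sigma K) (posdef_Sigma K)) _.
have tr_ge0 : 0 <= \tr (Sigma x K).
  by rewrite mxtrace_Sigma addr_ge0 // sumr_ge0 // => t _; apply: sqnorm_ge0.
apply: lerXn2r; rewrite ?nnegrE ?addr_ge0 ?divr_ge0 //.
have [->|d_neq0] := eqVneq (d%:R : R) 0; first by rewrite invr0 !mulr0 addr0 ler01.
have d_gt0 : 0 < d%:R :> R by rewrite lt_def d_neq0 ler0n.
rewrite ler_pdivrMr // mulrDl mul1r divfK //.
rewrite mxtrace_Sigma lerD2l.
apply: (@le_trans _ _ (\sum_(t < K) 1)); first by apply: ler_sum.
by rewrite sumr_const card_ord.
Qed.

Lemma potential_ge0_le1 k : 0 <= qform (invmx (Sigma x k)) (x k) <= 1.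
Proof.
have /andP[-> w_le] := qform_invmx_le (x k) (Sigma_unitmx k) (@sqnorm_le_qform_Sigma k).
exact: le_trans w_le (x_le1 k).
Qed.

Lemma sum_potential_le K :
  \sum_(k < K) qform (invmx (Sigma x k)) (x k) <= 2 * (d%:R * ln (1 + K%:R / d%:R)).
Proof.
have w_ge0 k : 0 <= qform (invmx (Sigma x k)) (x k) by case/andP: (potential_ge0_le1 k).
apply: (@le_trans _ _ (\sum_(k < K) 2 * ln (1 + qform (invmx (Sigma x k)) (x k)))).
  by apply: ler_sum => k _; apply: le_2ln1Dx; apply: potential_ge0_le1.
rewrite -mulr_sumr ler_pM2l // -ln_prod => [|k _]; last exact: ltr_wpDr (w_ge0 k) ltr01.
have base_gt0 : 0 < 1 + K%:R / d%:R :> R by rewrite ltr_wpDr ?divr_ge0.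
rewrite -det_Sigma mulr_natl -lnXn // ler_ln ?posrE ?det_Sigma_gt0 ?exprn_gt0 //.
exact: det_Sigma_le.
Qed.

Lemma sum_sqrt_potential_le K :
  \sum_(k < K) Num.sqrt (qform (invmx (Sigma x k)) (x k))
    <= Num.sqrt (2 * K%:R * d%:R * ln (1 + K%:R / d%:R)).
Proof.
have w_ge0 (k : 'I_K) : 0 <= qform (invmx (Sigma x k)) (x k).
  by case/andP: (potential_ge0_le1 k).
apply: le_trans (sum_sqrt_le w_ge0) _.
have ln_ge0 : 0 <= ln (1 + K%:R / d%:R) :> R by rewrite ln_ge0 // lerDl divr_ge0.
rewrite card_ord ler_sqrt ?mulr_ge0 //.
rewrite (_ : 2 * _ * _ * _ = K%:R * (2 * (d%:R * ln (1 + K%:R / d%:R)))).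
  by rewrite ler_wpM2l // sum_potential_le.
by rewrite mulrCA !mulrA.
Qed.

End GramMatrix.

Lemma kappa_inv_le (R : realType) (S A : Type) (q : S -> A -> R) x u :
  0 < q x u -> kappa_inv q <= q x u.
Proof.
move=> q_gt0; apply: ge_inf; last by exists x, u.
by exists 0 => _ [y [v [qv_gt0 ->]]]; apply: ltW.
Qed.

Lemma ratio_le_inv_kappa (R : realType) (S A : Type) (p q : S -> A -> R) x u :
  0 <= p x u <= 1 -> (0 < p x u -> 0 < q x u) -> 0 < kappa_inv q ->
  p x u / q x u <= (kappa_inv q)^-1.
Proof.
move=> /andP[p_ge0 p_le1] q_supp kappa_gt0.
have [p0|p_gt0] := eqVneq (p x u) 0; first by rewrite p0 mul0r invr_ge0 ltW.
have q_gt0 : 0 < q x u by apply: q_supp; rewrite lt_def p_gt0.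
apply: (@le_trans _ _ (q x u)^-1); first by apply: ler_piMl; rewrite // invr_ge0 ltW.
by rewrite lef_pV2 ?posrE ?kappa_inv_le.
Qed.

Theorem lemma8 (R : realType) (S A : Type) (H K d : nat)
  (phi : nat -> S -> A -> 'cV[R]_d)
  (dstar dmu : nat -> S -> A -> R)
  (s : nat -> nat -> S) (a : nat -> nat -> A)
  (hphi : forall h x u, vnorm2 (phi h x u) <= 1)
  (hdstar : forall h x u, 0 <= dstar h x u <= 1)
  (hdmu : forall h x u, 0 <= dmu h x u <= 1)
  (hcover : forall h x u, (h < H)%N -> 0 < dstar h x u -> 0 < dmu h x u)
  (hkappa : forall h, (h < H)%N -> 0 < kappa_inv (dmu h)) :
  forall h, (h < H)%N ->
  \sum_(k < K)
     dstar h (s k h) (a k h) / dmu h (s k h) (a k h)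
     * mxnorm (invmx (Sigma (fun t => phi h (s t h) (a t h)) k))
              (phi h (s k h) (a k h))
  <= (kappa_inv (dmu h))^-1
     * Num.sqrt (2 * K%:R * d%:R * ln (1 + K%:R / d%:R)).
Proof.
move=> h hH; set x := fun t => phi h (s t h) (a t h).
have x_le1 t : sqnorm (x t) <= 1.
  by rewrite -sqr_vnorm2; apply: exprn_ile1; [apply: sqrtr_ge0 | apply: hphi].
have kappa_gt0 := hkappa h hH.
apply: (@le_trans _ _ (\sum_(k < K) (kappa_inv (dmu h))^-1
                                     * Num.sqrt (qform (invmx (Sigma x k)) (x k)))).
  apply: ler_sum => k _; apply: ler_wpM2r; first exact: sqrtr_ge0.
  exact: ratio_le_inv_kappa (hdstar h _ _) (hcover h _ _ hH) kappa_gt0.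
rewrite -mulr_sumr; apply: ler_wpM2l; first by rewrite invr_ge0 ltW.
exact: sum_sqrt_potential_le.
Qed.
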